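(* Fix $\theta,\varphi\in\mathbb{R}$ and $v\in(0,1)$, and for $\varphi_1,\varphi_3\in\mathbb{R}$, $v_2\in[0,1)$ let $$g(\varphi_1,v_2,\varphi_3)=vv_2e^{i(\varphi-\varphi_1+\theta)}+vv_2e^{i(\theta-\varphi+\varphi_3)}+v^2e^{i(\varphi_3-\theta-\varphi_1)}.$$ Then for every $v_2$ with $v\le v_2<1$, the set $\{g(\varphi_1,v_2,\varphi_3):\varphi_1,\varphi_3\in\mathbb{R}\}\subset\mathbb{C}$ is simply connected (it has no holes). *)

(* The complex plane C is modelled as R * R
   (real part, imaginary part) with the product topology, over an
   arbitrary R : realType. *)
From HB Require Import structures.
From mathcomp Require Import all_boot all_order all_algebra.
From mathcomp Require Import all_classical all_reals all_analysis.
Set Implicit Arguments. Unset Strict Implicit. Unset Printing Implicit Defensive.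
Import Order.TTheory GRing.Theory Num.Theory.
Import numFieldNormedType.Exports.
Local Open Scope classical_set_scope.
Local Open Scope ring_scope.

Definition cplx (R : realType) := (R * R)%type.

Definition cexpi (R : realType) (a : R) : cplx R := (cos a, sin a).

Definition cscale (R : realType) (c : R) (z : cplx R) : cplx R := (c * z.1, c * z.2).

Definition cadd (R : realType) (z w : cplx R) : cplx R := (z.1 + w.1, z.2 + w.2).

Definition gmap (R : realType) (theta phi v : R) (phi1 v2 phi3 : R) : cplx R :=
  cadd (cadd (cscale (v * v2) (cexpi (phi - phi1 + theta)))
             (cscale (v * v2) (cexpi (theta - phi + phi3))))
       (cscale (v ^+ 2) (cexpi (phi3 - theta - phi1))).

Definition path_connected_set (R : realType) (T : topologicalType) (A : set T) : Prop :=
  A !=set0 /\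
  forall x y, A x -> A y ->
    exists gam : R -> T,
      [/\ {within `[0, 1]%classic, continuous gam},
          gam 0 = x, gam 1 = y & gam @` `[0, 1]%classic `<=` A].

Definition loops_contractible (R : realType) (T : topologicalType) (A : set T) : Prop :=
  forall gam : R -> T,
    {within `[0, 1]%classic, continuous gam} -> gam 0 = gam 1 ->
    gam @` `[0, 1]%classic `<=` A ->
    exists H : R * R -> T,
      [/\ {within `[0, 1]%classic `*` `[0, 1]%classic, continuous H},
          (forall s, 0 <= s <= 1 -> H (s, 0) = gam s /\ H (s, 1) = gam 0),
          (forall t, 0 <= t <= 1 -> H (0, t) = gam 0 /\ H (1, t) = gam 0)
        & H @` (`[0, 1]%classic `*` `[0, 1]%classic) `<=` A].

Definition simply_connected_set (R : realType) (T : topologicalType) (A : set T) : Prop :=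
  path_connected_set R A /\ loops_contractible R A.

(* Put [b] and [d] for the half-sum and half-difference of the first two phases (shifted by
   [3 theta]) and [u = e^{ib}]: then [g = e^{3 i theta} (2 v v2 cos d u + v^2 u^2)], so the set
   is a rotated union of limacons [k u^2 + c u], [|c| <= W], with [k = v^2] and [W = 2 v v2].
   This union is exactly the region [(|h|^2 - k^2)^2 <= W^2 |k + h|^2].  When [2 k <= W]
   (i.e. [v <= v2]) the region is star-shaped about [0]: the closed disc of radius [k] lies
   in it, and outside that disc the ratio [(|h|^2 - k^2)^2 / |k + h|^2] increases along rays.
   A set star-shaped about [0] is simply connected by an explicit contraction of loops. *)

From Pilot Require Import Defs.
From HB Require Import structures.
From mathcomp Require Import all_boot all_order all_algebra.
From mathcomp Require Import all_classical all_reals all_analysis.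
From mathcomp Require Import ring lra.
Set Implicit Arguments. Unset Strict Implicit. Unset Printing Implicit Defensive.
Import Order.TTheory GRing.Theory Num.Theory.
Import numFieldNormedType.Exports.
Local Open Scope classical_set_scope.
Local Open Scope ring_scope.

Local Notation cscale := Defs.cscale.
Local Notation cadd := Defs.cadd.

Section StarShaped.
Variable R : realType.
Implicit Types (A : set (cplx R)) (z w : cplx R) (a b c s t : R).

Lemma cscale1 z : cscale 1 z = z.
Proof. by case: z => x y; rewrite /cscale !mul1r. Qed.

Lemma cadd_scale0r z w : cadd z (cscale 0 w) = z.
Proof. by case: z => x y; rewrite /cadd /cscale /= !mul0r !addr0. Qed.

Lemma cadd_scale0l z w : cadd (cscale 0 w) z = z.
Proof. by case: z => x y; rewrite /cadd /cscale /= !mul0r !add0r. Qed.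

Lemma cscaleDl a b z : cadd (cscale a z) (cscale b z) = cscale (a + b) z.
Proof. by rewrite /cadd /cscale /= !mulrDl. Qed.

Section Continuity.
Variable T : topologicalType.
Implicit Types (x : T) (f g : T -> R) (F G : T -> cplx R).

Lemma cscale_continuous f F x : {for x, continuous f} -> {for x, continuous F} ->
  {for x, continuous (fun y => cscale (f y) (F y))}.
Proof.
move=> cf cF; have F1 : (F y).1 @[y --> x] --> (F x).1
  by apply: cvg_comp cF _; exact: cvg_fst.
have F2 : (F y).2 @[y --> x] --> (F x).2
  by apply: cvg_comp cF _; exact: cvg_snd.
by apply: (@cvg_pair _ _ _ _ (nbhs (f x * (F x).1)) (nbhs (f x * (F x).2))); apply: cvgM.
Qed.

Lemma cadd_continuous F G x : {for x, continuous F} -> {for x, continuous G} ->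
  {for x, continuous (fun y => cadd (F y) (G y))}.
Proof.
move=> cF cG; have F1 : (F y).1 @[y --> x] --> (F x).1
  by apply: cvg_comp cF _; exact: cvg_fst.
have F2 : (F y).2 @[y --> x] --> (F x).2
  by apply: cvg_comp cF _; exact: cvg_snd.
have G1 : (G y).1 @[y --> x] --> (G x).1
  by apply: cvg_comp cG _; exact: cvg_fst.
have G2 : (G y).2 @[y --> x] --> (G x).2
  by apply: cvg_comp cG _; exact: cvg_snd.
apply: (@cvg_pair _ _ _ _ (nbhs ((F x).1 + (G x).1)) (nbhs ((F x).2 + (G x).2)));
  exact: cvgD.
Qed.

Lemma min_continuous f g x : {for x, continuous f} -> {for x, continuous g} ->
  {for x, continuous (fun y => Num.min (f y) (g y))}.
Proof. exact: continuous_min. Qed.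

Lemma max_continuous f g x : {for x, continuous f} -> {for x, continuous g} ->
  {for x, continuous (fun y => Num.max (f y) (g y))}.
Proof. exact: continuous_max. Qed.

Lemma add_continuous f g x : {for x, continuous f} -> {for x, continuous g} ->
  {for x, continuous (fun y => f y + g y)}.
Proof. exact: cvgD. Qed.

Lemma opp_continuous f x : {for x, continuous f} -> {for x, continuous (fun y => - f y)}.
Proof. exact: cvgN. Qed.

Lemma mul_continuous f g x : {for x, continuous f} -> {for x, continuous g} ->
  {for x, continuous (fun y => f y * g y)}.
Proof. exact: cvgM. Qed.

End Continuity.

Ltac continuity_step := lazymatch goal with
  | |- continuous_at ?x (fun y => cadd (@?f y) (@?g y)) => refine (@cadd_continuous _ f g x _ _)
  | |- continuous_at ?x (fun y => cscale (@?f y) (@?g y)) => refine (@cscale_continuous _ f g x _ _)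
  | |- continuous_at ?x (fun y => @Order.min _ _ (@?f y) (@?g y)) => refine (@min_continuous _ f g x _ _)
  | |- continuous_at ?x (fun y => @Order.max _ _ (@?f y) (@?g y)) => refine (@max_continuous _ f g x _ _)
  | |- continuous_at ?x (fun y => @Algebra.add _ (@?f y) (@?g y)) => refine (@add_continuous _ f g x _ _)
  | |- continuous_at ?x (fun y => @Algebra.opp _ (@?f y)) => refine (@opp_continuous _ f x _)
  | |- continuous_at ?x (fun y => @GRing.mul _ (@?f y) (@?g y)) => refine (@mul_continuous _ f g x _ _)
  | |- continuous_at ?x (fun y => fst y) => exact: cvg_fst
  | |- continuous_at ?x (fun y => snd y) => exact: cvg_snd
  | |- continuous_at ?x (fun y => y) => exact: cvg_id
  | |- continuous_at ?x (fun _ => _) => exact: cvg_cst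
  | |- _ => progress rewrite /prop_for /inPhantom
  end.
Ltac continuity := repeat continuity_step.

(* [g \o clamp] extends a path [g] on [0, 1] continuously to the whole line. *)
Definition clamp s : R := Num.max 0 (Num.min 1 s).

Lemma clamp_itv s : 0 <= clamp s <= 1.
Proof. by rewrite /clamp le_max lexx ge_max ler01 ge_min lexx. Qed.

Lemma clamp_id s : 0 <= s <= 1 -> clamp s = s.
Proof. by move=> /andP[s0 s1]; rewrite /clamp min_r // max_r. Qed.

Lemma clamp_le0 s : s <= 0 -> clamp s = 0.
Proof. by move=> s0; rewrite /clamp max_l // ge_min s0 orbT. Qed.

Lemma clamp_ge1 s : 1 <= s -> clamp s = 1.
Proof. by move=> s1; rewrite /clamp min_l // max_r. Qed.

Lemma continuous_comp_clamp (U : topologicalType) (g : R -> U) :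
  {within `[0, 1], continuous g} -> continuous (g \o clamp).
Proof.
move/subspace_continuousP => cg s.
have clamp_cont : {for s, continuous clamp} by rewrite /clamp; continuity.
apply: (@cvg_trans _ (g @ within `[0, 1]%classic (nbhs (clamp s)))); last first.
  by apply: cg; rewrite /= in_itv /= clamp_itv.
move=> P /= /clamp_cont; rewrite !nbhs_simpl /=.
by apply: filterS => z; apply; rewrite /= in_itv /= clamp_itv.
Qed.

Definition star_shaped0 A := forall z c, A z -> 0 <= c <= 1 -> A (cscale c z).

Variable A : set (cplx R).
Hypothesis starA : star_shaped0 A.

Lemma star_shaped0_path_connected : A !=set0 -> path_connected_set R A.
Proof.
move=> A0; split => // x y Ax Ay.
exists (fun s => cadd (cscale (Num.max 0 (1 - 2 * s)) x) (cscale (Num.max 0 (2 * s - 1)) y)).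
split.
- by apply: continuous_subspaceT => s; continuity.
- by rewrite mulr0 subr0 sub0r max_r ?ler01 // max_l ?lerN10 // cscale1 cadd_scale0r.
- rewrite /= mulr1; have -> : 1 - 2 = -1 :> R by lra.
  have -> : 2 - 1 = 1 :> R by lra.
  by rewrite max_l ?lerN10 // max_r ?ler01 // cscale1 cadd_scale0l.
- move=> _ [s /= + <-]; rewrite in_itv /= => /andP[s0 s1].
  have [s_le|s_gt] := lerP s (1/2).
    rewrite [Num.max 0 (2 * s - 1)]max_l; last lra.
    by rewrite cadd_scale0r; apply: starA => //; rewrite le_max lexx ge_max ler01 /=; lra.
  rewrite [Num.max 0 (1 - 2 * s)]max_l; last lra.
  by rewrite cadd_scale0l; apply: starA => //; rewrite le_max lexx ge_max ler01 /=; lra.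
Qed.

(* The homotopy below, with [s] along the loop and [t] the time: for [t <= 1/2] the loop is
   compressed into the middle third of [0, 1] and scaled by [1 - 2 t], the outer thirds
   running along the segment from [gam 0] towards [0]; at [t = 1/2] it is that segment
   travelled there and back, which is then pulled along itself up to [gam 0].  Every point
   is thus a rescaling of a point of the loop, so star-shapedness keeps it in [A]. *)
Definition ramp t : R := Num.min (2 * t) 1.
Definition tent s t : R := Num.min (Num.min (3 * s) (3 - 3 * s)) (ramp t).
Definition fade t : R := Num.min 1 (2 - 2 * t).
Definition reparam s t : R := s + ramp t * (2 * s - 1).

Section LoopContraction.
Variable gam : R -> cplx R.

Definition contraction (q : R * R) : cplx R :=
  cadd (cscale (1 - fade q.2) (gam 0))
       (cscale (fade q.2 * (1 - tent q.1 q.2)) (gam (clamp (reparam q.1 q.2)))).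

Lemma continuous_contraction :
  {within `[0, 1], continuous gam} -> continuous contraction.
Proof.
move=> cg q; have cgc := continuous_comp_clamp cg.
rewrite /contraction /fade /tent /ramp; continuity.
have creparam : {for q, continuous (fun p : R * R => reparam p.1 p.2)}.
  by rewrite /reparam /ramp; continuity.
exact: (cvg_comp _ _ creparam (cgc _)).
Qed.

Lemma ramp_itv t : 0 <= t -> 0 <= ramp t <= 1.
Proof.
move=> t0; rewrite /ramp le_min ge_min lexx orbT ler01 !andbT; lra.
Qed.

Lemma tent_itv s t : 0 <= s <= 1 -> 0 <= t -> 0 <= tent s t <= 1.
Proof.
move=> /andP[s0 s1] /ramp_itv /andP[r0 r1].
rewrite /tent le_min ge_min r1 orbT r0 !andbT le_min; apply/andP; split; lra.
Qed.

Lemma fade_itv t : t <= 1 -> 0 <= fade t <= 1.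
Proof. by move=> t1; rewrite /fade le_min ge_min lexx ler01 /=; lra. Qed.

Lemma contraction_bottom s : 0 <= s <= 1 -> contraction (s, 0) = gam s.
Proof.
move=> s01; have /andP[s0 s1] := s01.
have ramp0 : ramp 0 = 0 by rewrite /ramp mulr0 min_l.
have fade0 : fade 0 = 1 by rewrite /fade mulr0 subr0 min_l // ler1n.
have tent0 : tent s 0 = 0 by rewrite /tent ramp0 min_r // le_min; apply/andP; split; lra.
have reparam0 : reparam s 0 = s by rewrite /reparam ramp0 mul0r addr0.
rewrite /contraction /= fade0 tent0 reparam0 clamp_id //.
by rewrite subrr cadd_scale0l subr0 mulr1 cscale1.
Qed.

Lemma contraction_top s : contraction (s, 1) = gam 0.
Proof.
rewrite /contraction /fade /= mulr1 subrr min_r // subr0 mul0r.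
by rewrite cadd_scale0r cscale1.
Qed.

Lemma contraction_left t : 0 <= t -> contraction (0, t) = gam 0.
Proof.
move=> t0; have /andP[r0 _] := ramp_itv t0.
have tent0 : tent 0 t = 0.
  by rewrite /tent mulr0 subr0 (@min_l _ _ 0) ?ler0n // min_l.
rewrite /contraction /reparam /= clamp_le0; last by rewrite mulr0 add0r; lra.
by rewrite tent0 subr0 mulr1 cscaleDl subrK cscale1.
Qed.

Lemma contraction_right t : gam 0 = gam 1 -> 0 <= t -> contraction (1, t) = gam 0.
Proof.
move=> loop t0; have /andP[r0 _] := ramp_itv t0.
have tent1 : tent 1 t = 0.
  by rewrite /tent mulr1 subrr (@min_r _ _ 3) ?ler0n // min_l.
rewrite /contraction /reparam /= clamp_ge1; last by rewrite mulr1; lra.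
by rewrite -loop tent1 subr0 mulr1 cscaleDl subrK cscale1.
Qed.

Lemma contraction_in s t : gam 0 = gam 1 -> (forall r, 0 <= r <= 1 -> A (gam r)) ->
  0 <= s <= 1 -> 0 <= t <= 1 -> A (contraction (s, t)).
Proof.
move=> loop Agam /andP[s0 s1] /andP[t0 t1].
have Agam0 : A (gam 0) by apply: Agam; rewrite lexx ler01.
have /andP[te0 te1] := @tent_itv s t (introT andP (conj s0 s1)) t0.
have /andP[f0 f1] := fade_itv t1.
rewrite /contraction /=.
have [t_le|t_gt] := lerP t (1/2).
  have -> : fade t = 1 by rewrite /fade min_l //; lra.
  by rewrite subrr cadd_scale0l mul1r; apply: starA; [apply: Agam; exact: clamp_itv | lra].
have ramp1 : ramp t = 1 by rewrite /ramp min_r //; lra.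
have [s_le|s_gt] := lerP s (1/3).
  rewrite clamp_le0; last by rewrite /reparam ramp1; lra.
  by rewrite cscaleDl; apply: starA => //; apply/andP; split; nra.
have [s_ge|s_lt] := lerP (2/3) s.
  rewrite clamp_ge1; last by rewrite /reparam ramp1; lra.
  by rewrite -loop cscaleDl; apply: starA => //; apply/andP; split; nra.
have -> : tent s t = 1 by rewrite /tent ramp1 min_r // le_min; lra.
by rewrite subrr mulr0 cadd_scale0r; apply: starA => //; lra.
Qed.
End LoopContraction.

Lemma star_shaped0_loops_contractible : loops_contractible R A.
Proof.
move=> gam cg loop gamA.
have Agam r : 0 <= r <= 1 -> A (gam r).
  by move=> r01; apply: gamA; exists r; rewrite //= in_itv.
exists (contraction gam); split.
- exact/continuous_subspaceT/continuous_contraction.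
- by move=> s s01; rewrite contraction_bottom // contraction_top.
- move=> t /andP[t0 _]; rewrite contraction_left // contraction_right //.
- move=> _ [[s t] /= [+ +] <-]; rewrite !in_itv /=.
  exact: contraction_in.
Qed.

Lemma star_shaped0_simply_connected : A !=set0 -> simply_connected_set R A.
Proof.
by move=> A0; split; [exact: star_shaped0_path_connected | exact: star_shaped0_loops_contractible].
Qed.

End StarShaped.

Section Limacon.
Variable R : realType.
Implicit Types (k W c : R) (h : cplx R).

Lemma normr_le_sqrt_sumsqr (a b : R) : `|a| <= Num.sqrt (a ^+ 2 + b ^+ 2).
Proof. by rewrite -sqrtr_sqr ler_wsqrtr // lerDl sqr_ge0. Qed.

Definition limacon k c u1 u2 : cplx R :=
  (c * u1 + k * (u1 ^+ 2 - u2 ^+ 2), c * u2 + 2 * k * u1 * u2).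

Definition limacon_region k W h :=
  (h.1 ^+ 2 + h.2 ^+ 2 - k ^+ 2) ^+ 2 <= W ^+ 2 * ((k + h.1) ^+ 2 + h.2 ^+ 2).

Lemma limacon_in_region k W c u1 u2 : u1 ^+ 2 + u2 ^+ 2 = 1 -> -W <= c <= W ->
  limacon_region k W (limacon k c u1 u2).
Proof.
move=> unit_u /andP[Wc cW]; rewrite /limacon_region /limacon /=.
have norm2 : (c * u1 + k * (u1 ^+ 2 - u2 ^+ 2)) ^+ 2 + (c * u2 + 2 * k * u1 * u2) ^+ 2
    - k ^+ 2 = c * (c + 2 * k * u1).
  transitivity ((u1 ^+ 2 + u2 ^+ 2) * (c ^+ 2 + 2 * c * k * u1 + k ^+ 2 * (u1 ^+ 2 + u2 ^+ 2))
      - k ^+ 2); first by ring.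
  by rewrite unit_u; ring.
have shift2 : (k + (c * u1 + k * (u1 ^+ 2 - u2 ^+ 2))) ^+ 2 + (c * u2 + 2 * k * u1 * u2) ^+ 2
    = (c + 2 * k * u1) ^+ 2.
  transitivity ((k * (1 - (u1 ^+ 2 + u2 ^+ 2))) ^+ 2
      + 2 * k * (1 - (u1 ^+ 2 + u2 ^+ 2)) * u1 * (c + 2 * k * u1)
      + (u1 ^+ 2 + u2 ^+ 2) * (c + 2 * k * u1) ^+ 2); first by ring.
  by rewrite unit_u; ring.
rewrite norm2 shift2 exprMn; apply: ler_wpM2r; first exact: sqr_ge0.
nra.
Qed.

Lemma limacon_region_inv k W h : 0 <= W -> limacon_region k W h ->
  exists u1 u2 c, [/\ u1 ^+ 2 + u2 ^+ 2 = 1, -W <= c <= W & h = limacon k c u1 u2].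
Proof.
case: h => h1 h2 W0; rewrite /limacon_region /=.
set M := (k + h1) ^+ 2 + h2 ^+ 2; set S := h1 ^+ 2 + h2 ^+ 2 - k ^+ 2 => region.
have [M0|Mn0] := eqVneq M 0.
  have [kh1 h2_0] : k + h1 = 0 /\ h2 = 0.
    by move/eqP: M0; rewrite /M paddr_eq0 ?sqr_ge0 // !sqrf_eq0 => /andP[/eqP-> /eqP->].
  exists 0, 1, 0; split; rewrite ?expr1n ?expr0n ?add0r ?oppr_le0 ?W0 //.
  rewrite /limacon h2_0; congr pair; rewrite ?expr0n ?expr1n /=; lra.
have M_gt0 : 0 < M by rewrite lt0r Mn0 /M addr_ge0 ?sqr_ge0.
set m := Num.sqrt M.
have m_gt0 : 0 < m by rewrite sqrtr_gt0.
have m2 : m ^+ 2 = M by rewrite sqr_sqrtr // ltW.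
have mn0 : m != 0 by rewrite gt_eqF.
exists ((k + h1) / m), (h2 / m), (S / m); split.
- by rewrite !expr_div_n -mulrDl -/M -m2 divff // expf_eq0 (negPf mn0) andbF.
- have Wm : 0 <= W * m by rewrite mulr_ge0 // ltW.
  have : S ^+ 2 <= (W * m) ^+ 2 by rewrite exprMn m2.
  move=> S2; rewrite ler_pdivlMr // ler_pdivrMr // mulNr; apply/andP; split; nra.
- rewrite /limacon; congr pair.
    rewrite (_ : _ + _ = (S * (k + h1) + k * ((k + h1) ^+ 2 - h2 ^+ 2)) / m ^+ 2);
      last by field.
    by rewrite m2 (_ : _ + _ = h1 * M) ?mulfK // /M /S; ring.
  rewrite (_ : _ + _ = (S * h2 + 2 * k * (k + h1) * h2) / m ^+ 2); last by field.
  by rewrite m2 (_ : _ + _ = h2 * M) ?mulfK // /M /S; ring.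
Qed.

Lemma limacon_region_small k W h : 0 <= k -> 2 * k <= W -> h.1 ^+ 2 + h.2 ^+ 2 <= k ^+ 2 ->
  limacon_region k W h.
Proof.
case: h => h1 h2 /= k0 kW; rewrite /limacon_region /=.
set s := Num.sqrt (h1 ^+ 2 + h2 ^+ 2).
have s0 : 0 <= s := sqrtr_ge0 _.
have s2 : s ^+ 2 = h1 ^+ 2 + h2 ^+ 2 by rewrite sqr_sqrtr // addr_ge0 ?sqr_ge0.
rewrite -s2 => sk2.
have sk : s <= k by rewrite -(ler_pXn2r (n := 2)) ?nnegrE.
have /andP[h1s _] : - s <= h1 <= s by rewrite -ler_norml normr_le_sqrt_sumsqr.
have shift2 : (k + h1) ^+ 2 + h2 ^+ 2 = k ^+ 2 + 2 * k * h1 + s ^+ 2 by rewrite s2; ring.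
have ks_W : (k + s) ^+ 2 <= W ^+ 2 by rewrite ler_pXn2r // ?nnegrE; lra.
have ks_shift : (k - s) ^+ 2 <= k ^+ 2 + 2 * k * h1 + s ^+ 2 by nra.
rewrite shift2 (_ : _ ^+ 2 = (k - s) ^+ 2 * (k + s) ^+ 2); last by ring.
apply: (le_trans (ler_wpM2l (sqr_ge0 _) ks_W)).
by rewrite mulrC; apply: ler_wpM2l; first exact: sqr_ge0.
Qed.

(* Along a ray through [0], beyond the circle of radius [k] the ratio
   [(|h|^2 - k^2)^2 / |k + h|^2] is nondecreasing.  The inequality is affine in [h1],
   so it suffices to check it at [h1 = r] and [h1 = -r], where it factors. *)
Lemma limacon_ray_mono (k r c h1 : R) : 0 <= k -> k < c * r -> c <= 1 -> -r <= h1 <= r ->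
  ((c * r) ^+ 2 - k ^+ 2) ^+ 2 * (k ^+ 2 + 2 * k * h1 + r ^+ 2)
  <= (r ^+ 2 - k ^+ 2) ^+ 2 * (k ^+ 2 + 2 * k * (c * h1) + (c * r) ^+ 2).
Proof.
move=> k0 ks c1 /andP[rh1 h1r]; set s := c * r in ks *.
have r0 : 0 <= r by lra.
have sr : s <= r by rewrite /s; nra.
have r_gt0 : 0 < r by lra.
rewrite -subr_ge0 -(pmulr_rge0 _ (mulr_gt0 (ltr0n _ 2) r_gt0)).
set F := (r + k) ^+ 2 * (s + k) ^+ 2 * ((r - s) * (r + s - 2 * k)).
set G := (r - k) ^+ 2 * (s - k) ^+ 2 * ((r - s) * (r + s + 2 * k)).
set gap := (X in 0 <= X).
have -> : gap = (r + h1) * F + (r - h1) * G by rewrite /gap /F /G /s; ring.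
by apply: addr_ge0; apply: mulr_ge0; rewrite /F /G ?mulr_ge0 ?sqr_ge0 //; lra.
Qed.

Lemma limacon_region_scale k W c h : 0 <= k -> 2 * k <= W -> 0 <= c <= 1 ->
  limacon_region k W h -> limacon_region k W (cscale c h).
Proof.
case: h => h1 h2 k0 kW /andP[c0 c1]; rewrite /limacon_region /cscale /= => region.
set r := Num.sqrt (h1 ^+ 2 + h2 ^+ 2).
have r2 : r ^+ 2 = h1 ^+ 2 + h2 ^+ 2 by rewrite sqr_sqrtr // addr_ge0 ?sqr_ge0.
have r0 : 0 <= r := sqrtr_ge0 _.
have scaled2 : (c * h1) ^+ 2 + (c * h2) ^+ 2 = (c * r) ^+ 2 by rewrite !exprMn r2; ring.
have [small|ks] := lerP (c * r) k.
  apply: (@limacon_region_small k W (c * h1, c * h2)) => //=.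
  by rewrite scaled2 ler_pXn2r // ?nnegrE ?mulr_ge0.
have h1r : -r <= h1 <= r by rewrite -ler_norml normr_le_sqrt_sumsqr.
have kr : k < r by apply: (lt_le_trans ks); rewrite ler_piMl.
have D_gt0 : 0 < (r ^+ 2 - k ^+ 2) ^+ 2.
  by rewrite exprn_gt0 // subr_gt0 ltr_pXn2r ?nnegrE.
rewrite -r2 (_ : (k + h1) ^+ 2 + h2 ^+ 2 = k ^+ 2 + 2 * k * h1 + r ^+ 2) in region;
  last by rewrite r2; ring.
rewrite scaled2 (_ : (k + c * h1) ^+ 2 + (c * h2) ^+ 2 = k ^+ 2 + 2 * k * (c * h1) + (c * r) ^+ 2);
  last by rewrite -scaled2; ring.
rewrite -(ler_pM2l D_gt0).
have ray := @limacon_ray_mono k r c h1 k0 ks c1 h1r.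
apply: (@le_trans _ _ (W ^+ 2 * (((c * r) ^+ 2 - k ^+ 2) ^+ 2 * (k ^+ 2 + 2 * k * h1 + r ^+ 2)))).
  by rewrite [X in _ <= X]mulrCA [X in X <= _]mulrC; apply: ler_wpM2l; first exact: sqr_ge0.
by rewrite [X in _ <= X]mulrCA; apply: ler_wpM2l; first exact: sqr_ge0.
Qed.

End Limacon.

Section Gmap.
Variable R : realType.

Definition crot (a : R) (p : cplx R) : cplx R :=
  (cos a * p.1 - sin a * p.2, sin a * p.1 + cos a * p.2).

Lemma crot_scale a c p : crot a (cscale c p) = cscale c (crot a p).
Proof. by rewrite /crot /cscale /=; congr pair; ring. Qed.

Lemma unit_circle_angle (a b : R) : a ^+ 2 + b ^+ 2 = 1 -> exists t, cos t = a /\ sin t = b.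
Proof.
move=> unit_ab; have a1 : -1 <= a <= 1.
  by rewrite -ler_norml -sqrtr1 -unit_ab normr_le_sqrt_sumsqr.
have a_itv : a \in `[-1, 1] by rewrite in_itv.
have sin_acos_ab : sin (acos a) = `|b|.
  by rewrite sin_acos // -unit_ab addrC addKr sqrtr_sqr.
have [b0|b0] := lerP 0 b.
  by exists (acos a); rewrite acosK // sin_acos_ab ger0_norm.
by exists (- acos a); rewrite cosN sinN acosK // sin_acos_ab ltr0_norm ?opprK.
Qed.

Lemma gmap_limacon theta phi v v2 phi1 phi3 b d :
  phi - phi1 + theta = 3 * theta + b + d -> theta - phi + phi3 = 3 * theta + b - d ->
  gmap theta phi v phi1 v2 phi3
  = crot (3 * theta) (limacon (v ^+ 2) (2 * (v * v2) * cos d) (cos b) (sin b)).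
Proof.
move=> e1 e2; have e3 : phi3 - theta - phi1 = 3 * theta + (b + b) by lra.
rewrite /gmap /cadd /cscale /cexpi e1 e2 e3 /crot /limacon /=.
by rewrite !cosD !sinD ?cosN ?sinN ?cosD ?sinD; congr pair; ring.
Qed.

Lemma gmap_range theta phi v v2 z : 0 < v * v2 ->
  (exists phi1 phi3, z = gmap theta phi v phi1 v2 phi3) <->
  exists2 h, limacon_region (v ^+ 2) (2 * (v * v2)) h & z = crot (3 * theta) h.
Proof.
move=> V_gt0; have W_gt0 : 0 < 2 * (v * v2) by rewrite mulr_gt0.
split.
- move=> [phi1 [phi3 ->]].
  set X := phi - phi1 + theta - 3 * theta; set Y := theta - phi + phi3 - 3 * theta.
  rewrite (@gmap_limacon _ _ v v2 _ _ ((X + Y) / 2) ((X - Y) / 2)); last 2 first.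
  + by rewrite /X /Y; field.
  + by rewrite /X /Y; field.
  eexists; last reflexivity.
  apply: limacon_in_region; first exact: cos2Dsin2.
  have := cos_geN1 ((X - Y) / 2); have := cos_le1 ((X - Y) / 2).
  by move=> cos_le cos_ge; apply/andP; split; nra.
- move=> [h region ->].
  have [u1 [u2 [c [unit_u c_itv ->]]]] := limacon_region_inv (ltW W_gt0) region.
  have [b [cb sb]] := unit_circle_angle unit_u.
  set d := acos (c / (2 * (v * v2))).
  have c_div : -1 <= c / (2 * (v * v2)) <= 1.
    by rewrite ler_pdivlMr // ler_pdivrMr // mulN1r mul1r.
  have cd : 2 * (v * v2) * cos d = c.
    by rewrite acosK ?in_itv // mulrC divfK // gt_eqF.
  exists (phi + theta - 3 * theta - b - d), (3 * theta + b - d - theta + phi).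
  by rewrite (@gmap_limacon _ _ v v2 _ _ b d) ?cd ?cb ?sb //; ring.
Qed.

Lemma gmap_range_star_shaped0 theta phi v v2 : 0 < v -> v <= v2 ->
  star_shaped0 [set z : cplx R | exists phi1 phi3, z = gmap theta phi v phi1 v2 phi3].
Proof.
move=> v_gt0 vv2; have V_gt0 : 0 < v * v2 by rewrite mulr_gt0 // (lt_le_trans v_gt0).
move=> _ c /(gmap_range _ _ _ V_gt0) [h region ->] c01.
apply/(gmap_range _ _ _ V_gt0); exists (cscale c h); last by rewrite crot_scale.
apply: limacon_region_scale => //; first exact: sqr_ge0.
by rewrite ler_pM2l // expr2 ler_pM2l.
Qed.

End Gmap.

Theorem mainTheorem9 (R : realType) (theta phi v : R) (hv : 0 < v < 1) (v2 : R)
    (hv2 : v <= v2 < 1) :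
  simply_connected_set R
    [set z : cplx R | exists phi1 phi3 : R, z = gmap theta phi v phi1 v2 phi3].
Proof.
case/andP: hv => v_gt0 _; case/andP: hv2 => vv2 _.
apply: star_shaped0_simply_connected; first exact: gmap_range_star_shaped0.
by exists (gmap theta phi v 0 v2 0), 0, 0.
Qed.
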